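(* Let $\mathbf{S}\in\mathbb{R}^{N\times N}$ be a spatial graph shift operator and $\mathbf{S}_T\in\mathbb{R}^{T\times T}$ a temporal graph shift operator. For a matrix $\mathbf{X}\in\mathbb{R}^{N\times T}$ let $\mathbf{x}_\diamond=\mathrm{vec}(\mathbf{X})\in\mathbb{R}^{NT}$. Let $\Phi(\,\cdot\,;\mathcal{H}(\mathbf{S}_T,\mathbf{S}))$ be a graph-time convolutional neural network (defined in the context) built with filters $\mathbf{H}^{fg}_\ell(\mathbf{S},\mathbf{S}_T)=\sum_{k=0}^{\bar K}\sum_{l=0}^{\tilde K}h^{fg}_{kl\ell}(\mathbf{S}_T^{\,l}\otimes\mathbf{S}^k)$ and a pointwise nonlinearity $\sigma$. Then for every permutation matrix $\mathbf{P}$ in $$\mathcal{P}=\{\mathbf{P}\in\{0,1\}^{N\times N}:\ \mathbf{P}\mathbf{1}=\mathbf{1},\ \mathbf{P}^\top\mathbf{1}=\mathbf{1}\}$$ it holds that $$\mathbf{P}^\top\,\mathrm{vec}^{-1}\!\big(\Phi(\mathrm{vec}(\mathbf{X});\mathcal{H}(\mathbf{S}_T,\mathbf{S}))\big)=\mathrm{vec}^{-1}\!\big(\Phi(\mathrm{vec}(\mathbf{P}^\top\mathbf{X});\mathcal{H}(\mathbf{S}_T,\mathbf{P}^\top\mathbf{S}\mathbf{P}))\big).$$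
   Context: $\mathrm{vec}$ stacks the columns of an $N\times T$ matrix into a vector of length $NT$ (entry $(i,t)$ goes to position $N(t-1)+i$), and $\mathrm{vec}^{-1}$ is its inverse. $\otimes$ is the Kronecker product. Graph-time convolutional neural network (GTCNN): fix $L\ge1$ layers and feature counts $F_0=1$, $F_1=\dots=F_{L-1}=F$, $F_L=1$. Set $\mathbf{x}^1_{\diamond,0}=\mathbf{x}_\diamond$. For $\ell=1,\dots,L$ and $f=1,\dots,F_\ell$, $$\mathbf{x}^f_{\diamond,\ell}=\sigma\Big(\sum_{g=1}^{F_{\ell-1}}\mathbf{H}^{fg}_\ell(\mathbf{S},\mathbf{S}_T)\,\mathbf{x}^g_{\diamond,\ell-1}\Big),$$ where $\sigma:\mathbb{R}\to\mathbb{R}$ is applied entrywise and $\mathbf{H}^{fg}_\ell(\mathbf{S},\mathbf{S}_T)=\sum_{k=0}^{\bar K}\sum_{l=0}^{\tilde K}h^{fg}_{kl\ell}(\mathbf{S}_T^{\,l}\otimes\mathbf{S}^k)$ with fixed scalar coefficients. The filter tensor is $\mathcal{H}(\mathbf{S}_T,\mathbf{S})=\{\mathbf{H}^{fg}_\ell(\mathbf{S},\mathbf{S}_T)\}_{\ell fg}$ and the GTCNN output is $\Phi(\mathbf{x}_\diamond;\mathcal{H}(\mathbf{S}_T,\mathbf{S}))=\mathbf{x}^1_{\diamond,L}\in\mathbb{R}^{NT}$. $\mathcal{H}(\mathbf{S}_T,\mathbf{P}^\top\mathbf{S}\mathbf{P})$ denotes the same filter tensor (same coefficients) with $\mathbf{S}$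 replaced by $\mathbf{P}^\top\mathbf{S}\mathbf{P}$. *)

From mathcomp Require Import all_boot all_order all_algebra.
From mathcomp Require Import reals.
Set Implicit Arguments. Unset Strict Implicit. Unset Printing Implicit Defensive.
Import Order.TTheory GRing.Theory Num.Theory.
Local Open Scope ring_scope.

Section Defs.
Variable R : realType.

Lemma divn_ord_lt m n (r : 'I_(m * n)) : (r %/ n < m)%N.
Proof.
move: (nat_of_ord r) (ltn_ord r) => k; clear r.
case: n => [|n]; first by rewrite muln0.
by move=> H; rewrite ltn_divLR.
Qed.
Lemma modn_ord_lt m n (r : 'I_(m * n)) : (r %% n < n)%N.
Proof.
move: (nat_of_ord r) (ltn_ord r) => k; clear r.
case: n => [|n]; first by rewrite muln0.
by move=> _; rewrite ltn_mod.
Qed.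
Definition ord_hi m n (r : 'I_(m * n)) : 'I_m := Ordinal (divn_ord_lt r).
Definition ord_lo m n (r : 'I_(m * n)) : 'I_n := Ordinal (modn_ord_lt r).

Lemma pair_ord_lt m n (a : 'I_m) (b : 'I_n) : (a * n + b < m * n)%N.
Proof.
have ha := ltn_ord a; have hb := ltn_ord b.
apply: (@leq_trans (a * n + n)); first by rewrite ltn_add2l.
by rewrite -[X in (_ + X <= _)%N]mul1n -mulnDl addn1 leq_mul2r ha orbT.
Qed.
Definition ord_pair m n (a : 'I_m) (b : 'I_n) : 'I_(m * n) :=
  Ordinal (pair_ord_lt a b).

(* Kronecker product A ⊗ B, with A : m1 x n1, B : m2 x n2:
   (A ⊗ B)[(a,b),(c,d)] = A[a,c] * B[b,d], row (a,b) at position a*m2+b. *)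
Definition kron m1 n1 m2 n2 (A : 'M[R]_(m1, n1)) (B : 'M[R]_(m2, n2))
  : 'M[R]_(m1 * m2, n1 * n2) :=
  \matrix_(r, c) (A (ord_hi r) (ord_hi c) * B (ord_lo r) (ord_lo c)).

(* vec: column stacking of an N x T matrix; entry (i,t) (0-based) goes to
   position N*t + i (0-based), i.e. N(t-1)+i in 1-based indexing. *)
Definition vec N T (X : 'M[R]_(N, T)) : 'cV[R]_(T * N) :=
  \col_k X (ord_lo k) (ord_hi k).
Definition unvec N T (v : 'cV[R]_(T * N)) : 'M[R]_(N, T) :=
  \matrix_(i, t) v (ord_pair t i) 0.

Definition gt_filter N T (Kb Kt : nat) (h : nat -> nat -> R)
  (S : 'M[R]_N) (ST : 'M[R]_T) : 'M[R]_(T * N) :=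
  \sum_(k < Kb.+1) \sum_(l < Kt.+1) h k l *: kron (ST ^+ l) (S ^+ k).

Definition feat (L F ell : nat) : nat :=
  if (ell == 0)%N || (ell == L) then 1%N else F.

(* GTCNN. Coefficients h ell f g k l = h^{fg}_{k l ell}; features f, g are
   indexed from 1 as in the paper. x ell f = x^f_{⋄,ell}. *)
Fixpoint gtcnn_layer N T (L F Kb Kt : nat)
  (h : nat -> nat -> nat -> nat -> nat -> R) (sigma : R -> R)
  (S : 'M[R]_N) (ST : 'M[R]_T) (x0 : 'cV[R]_(T * N)) (ell : nat)
  : nat -> 'cV[R]_(T * N) :=
  match ell with
  | 0 => fun _ => x0
  | ell'.+1 => fun f =>
      map_mx sigma
        (\sum_(g < feat L F ell')
            gt_filter Kb Kt (h ell'.+1 f g.+1) S ST *m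
            gtcnn_layer L F Kb Kt h sigma S ST x0 ell' g.+1)
  end.

Definition gtcnn N T (L F Kb Kt : nat)
  (h : nat -> nat -> nat -> nat -> nat -> R) (sigma : R -> R)
  (S : 'M[R]_N) (ST : 'M[R]_T) (x : 'cV[R]_(T * N)) : 'cV[R]_(T * N) :=
  gtcnn_layer L F Kb Kt h sigma S ST x L 1%N.

Definition perm_matrix N (P : 'M[R]_N) : Prop :=
  (forall i j, P i j = 0 \/ P i j = 1) /\
  P *m const_mx 1 = const_mx 1 :> 'cV[R]_N /\
  P^T *m const_mx 1 = const_mx 1 :> 'cV[R]_N.

End Defs.

(** Vectorization turns the graph-time filter into the matrix map
    [Y |-> \sum_k \sum_l h k l *: (S ^+ k *m Y *m (S_T ^+ l)^T)], so conjugating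
    [S] by an orthogonal [P] and replacing [Y] by [P^T *m Y] only multiplies the
    output by [P^T] on the left. A permutation matrix is orthogonal, and [P^T]
    merely reorders rows, so it also commutes with the entrywise nonlinearity;
    hence every layer of the network, and thus its output, is equivariant. *)

From mathcomp Require Import all_boot all_order all_algebra.
From mathcomp Require Import fingroup perm reals.
Local Open Scope ring_scope.
Import GRing.Theory Num.Theory.

Lemma ord_hi_pair m n (a : 'I_m) (b : 'I_n) : ord_hi (ord_pair a b) = a.
Proof.
apply: val_inj => /=.
by rewrite divnMDl ?(leq_ltn_trans _ (ltn_ord b)) // divn_small // addn0.
Qed.

Lemma ord_lo_pair m n (a : 'I_m) (b : 'I_n) : ord_lo (ord_pair a b) = b.
Proof. by apply: val_inj => /=; rewrite modnMDl modn_small. Qed.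

Lemma ord_pair_hilo m n (r : 'I_(m * n)) : ord_pair (ord_hi r) (ord_lo r) = r.
Proof. by apply: val_inj => /=; rewrite -divn_eq. Qed.

Lemma big_ord_pair (V : nmodType) m n (F : 'I_(m * n) -> V) :
  \sum_r F r = \sum_(a < m) \sum_(b < n) F (ord_pair a b).
Proof.
rewrite pair_big (reindex (fun ab : 'I_m * 'I_n => ord_pair ab.1 ab.2)) //=.
apply: onW_bij; exists (fun r => (ord_hi r, ord_lo r)) => [[a b]|r] /=.
  by rewrite ord_hi_pair ord_lo_pair.
by rewrite ord_pair_hilo.
Qed.

Section Vectorization.
Variable R : realType.

Lemma vecK N T : cancel (@vec R N T) (@unvec R N T).
Proof. by move=> X; apply/matrixP => i t; rewrite !mxE ord_hi_pair ord_lo_pair. Qed.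

Lemma unvecK N T : cancel (@unvec R N T) (@vec R N T).
Proof. by move=> v; apply/matrixP => r j; rewrite !mxE ord_pair_hilo (ord1 j). Qed.

Lemma unvec_sum N T (I : finType) (v : I -> 'cV[R]_(T * N)) :
  unvec (\sum_i v i) = \sum_i unvec (v i).
Proof.
apply/matrixP => i t; rewrite !mxE !summxE.
by apply: eq_bigr => k _; rewrite mxE.
Qed.

Lemma unvecZ N T a (v : 'cV[R]_(T * N)) : unvec (a *: v) = a *: unvec v.
Proof. by apply/matrixP => i t; rewrite !mxE. Qed.

Lemma map_unvec N T (f : R -> R) (v : 'cV[R]_(T * N)) :
  unvec (map_mx f v) = map_mx f (unvec v).
Proof. by apply/matrixP => i t; rewrite !mxE. Qed.

Lemma unvec_kron_mul N N' T T' (A : 'M[R]_(T, T')) (B : 'M[R]_(N, N'))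
    (Y : 'M[R]_(N', T')) :
  unvec (kron A B *m vec Y) = B *m Y *m A^T.
Proof.
apply/matrixP => i t; rewrite !mxE big_ord_pair.
apply: eq_bigr => a _; rewrite !mxE mulr_suml; apply: eq_bigr => b _.
by rewrite !mxE !ord_hi_pair !ord_lo_pair [RHS]mulrC mulrA.
Qed.

Lemma unvec_gt_filter_mul N T Kb Kt (c : nat -> nat -> R) (S : 'M[R]_N)
    (ST : 'M[R]_T) (Y : 'M[R]_(N, T)) :
  unvec (gt_filter Kb Kt c S ST *m vec Y) =
  \sum_(k < Kb.+1) \sum_(l < Kt.+1) c k l *: (S ^+ k *m Y *m (ST ^+ l)^T).
Proof.
rewrite mulmx_suml unvec_sum; apply: eq_bigr => k _.
rewrite mulmx_suml unvec_sum; apply: eq_bigr => l _.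
by rewrite -scalemxAl unvecZ unvec_kron_mul.
Qed.

End Vectorization.

Lemma mulmx_conjX (R : comUnitRingType) n (P Q S : 'M[R]_n) k :
  P *m Q = 1%:M -> (Q *m S *m P) ^+ k = Q *m S ^+ k *m P.
Proof.
move=> PQ; have QP := mulmx1C PQ.
elim: k => [|k IHk]; first by rewrite !expr0 mulmx1 QP.
rewrite !exprS IHk -!mulmxE !mulmxA -[Q *m S *m P *m Q]mulmxA PQ mulmx1.
by rewrite -!mulmxA.
Qed.

Lemma sum01_unit (R : numDomainType) (I : finType) (v : I -> R) :
  (forall i, v i = 0 \/ v i = 1) -> \sum_i v i = 1 ->
  exists j, forall i, v i = (i == j)%:R.
Proof.
move=> v01 v_sum1.
have [j /eqP vj1|no1] := pickP (fun j => v j == 1); last first.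
  move: v_sum1; rewrite big1 => [/eqP|i _]; first by rewrite eq_sym oner_eq0.
  by case: (v01 i) => // vi1; move: (no1 i); rewrite vi1 eqxx.
exists j => i; case: eqP => [->|/eqP neq_ij]; first by rewrite vj1.
have v_ge0 i' : 0 <= v i' by case: (v01 i') => ->; rewrite ?ler01.
move: v_sum1; rewrite (bigD1 j) //= vj1 => /eqP; rewrite -subr_eq0 addrC addrK.
by move/eqP/psumr_eq0P; apply.
Qed.

Lemma perm_matrix_is_perm_mx (R : realType) N (P : 'M[R]_N) :
  perm_matrix P -> is_perm_mx P.
Proof.
case=> P01 [row_sum1 col_sum1].
have sum_ones (A : 'M[R]_N) i : (A *m const_mx 1 : 'cV_N) i 0 = \sum_j A i j.
  by rewrite mxE; apply: eq_bigr => j _; rewrite mxE mulr1.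
have /fin_all_exists[f Pf] : forall i, exists j, forall j', P i j' = (j' == j)%:R.
  move=> i; apply: sum01_unit => [j|]; first exact: P01.
  by rewrite -sum_ones row_sum1 mxE.
have col_unit j : exists i, forall i', P i' j = (i' == i)%:R.
  apply: sum01_unit => [i|]; first exact: P01.
  have := sum_ones P^T j; rewrite col_sum1 mxE => ->.
  by apply: eq_bigr => i _; rewrite mxE.
have f_inj : injective f.
  move=> a b fab; have [i Pi] := col_unit (f a).
  have Pi1 i' : P i' (f a) = 1 -> i' = i.
    by rewrite Pi; case: eqP => // _ /eqP; rewrite eq_sym oner_eq0.
  have -> : a = i by apply: Pi1; rewrite Pf eqxx.
  by apply: esym; apply: Pi1; rewrite Pf fab eqxx.
apply/is_perm_mxP; exists (perm f_inj).
by apply/matrixP => i j; rewrite !mxE Pf permE eq_sym.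
Qed.

Lemma perm_mx_mul_tr (R : pzRingType) n (s : 'S_n) :
  perm_mx s *m (perm_mx s)^T = 1%:M :> 'M[R]_n.
Proof. by rewrite tr_perm_mx -perm_mxM mulgV perm_mx1. Qed.

Lemma map_tr_perm_mx_mul (R : pzRingType) (f : R -> R) n T (s : 'S_n)
    (Y : 'M[R]_(n, T)) :
  map_mx f ((perm_mx s)^T *m Y) = (perm_mx s)^T *m map_mx f Y.
Proof. by rewrite tr_perm_mx -!row_permE map_row_perm. Qed.

Section Equivariance.
Variables (R : realType) (N T L F Kb Kt : nat).
Variables (h : nat -> nat -> nat -> nat -> nat -> R) (sigma : R -> R).
Variables (S : 'M[R]_N) (ST : 'M[R]_T) (P : 'M[R]_N).
Hypothesis P_orthogonal : P *m P^T = 1%:M.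
Hypothesis map_sigma_trP :
  forall Y : 'M[R]_(N, T), map_mx sigma (P^T *m Y) = P^T *m map_mx sigma Y.

Lemma gt_filter_conj_mul Kb' Kt' (c : nat -> nat -> R) (Y : 'M[R]_(N, T)) :
  unvec (gt_filter Kb' Kt' c (P^T *m S *m P) ST *m vec (P^T *m Y)) =
  P^T *m unvec (gt_filter Kb' Kt' c S ST *m vec Y).
Proof.
rewrite !unvec_gt_filter_mul mulmx_sumr; apply: eq_bigr => k _.
rewrite mulmx_sumr; apply: eq_bigr => l _.
rewrite -scalemxAr mulmx_conjX //; congr (_ *: _).
by rewrite -!mulmxA (mulmxA P) P_orthogonal mul1mx.
Qed.

Lemma gtcnn_layer_conj (X : 'M[R]_(N, T)) ell f :
  P^T *m unvec (gtcnn_layer L F Kb Kt h sigma S ST (vec X) ell f) =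
  unvec (gtcnn_layer L F Kb Kt h sigma (P^T *m S *m P) ST (vec (P^T *m X)) ell f).
Proof.
elim: ell f => [|ell IHell] f /=; first by rewrite !vecK.
rewrite !map_unvec -map_sigma_trP !unvec_sum mulmx_sumr; congr (map_mx _ _).
apply: eq_bigr => g _.
by rewrite -[gtcnn_layer _ _ _ _ _ _ (P^T *m S *m P) _ _ _ _]unvecK -IHell
  gt_filter_conj_mul unvecK.
Qed.

End Equivariance.

Theorem proposition2 (R : realType) (N T L F Kb Kt : nat)
  (h : nat -> nat -> nat -> nat -> nat -> R) (sigma : R -> R)
  (S : 'M[R]_N) (ST : 'M[R]_T) (X : 'M[R]_(N, T)) (P : 'M[R]_N) :
  (1 <= L)%N ->
  perm_matrix P ->
  P^T *m unvec (gtcnn L F Kb Kt h sigma S ST (vec X)) =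
  unvec (gtcnn L F Kb Kt h sigma (P^T *m S *m P) ST (vec (P^T *m X))).
Proof.
move=> _ /perm_matrix_is_perm_mx/is_perm_mxP[s ->].
apply: gtcnn_layer_conj; first exact: perm_mx_mul_tr.
exact: map_tr_perm_mx_mul.
Qed.
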